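(* In any oriented graph, a vertex of maximum score is a weak king.
   Context: An oriented graph is a digraph with no loops and no pair of symmetric arcs. For vertices $u,v$ write $u(1\text{-}0)v$ if there is an arc from $u$ to $v$, and $u(0\text{-}0)v$ if there is no arc between $u$ and $v$. If $D$ has $n$ vertices, the score of a vertex $v$ is $s(v) = n-1+d^+(v)-d^-(v)$, where $d^+(v), d^-(v)$ are the out- and indegree of $v$. A vertex $v$ is weakly reachable within two steps from $u$ if $u(1\text{-}0)v$, or $u(0\text{-}0)v$, or for some vertex $w$ one has $u(1\text{-}0)w(1\text{-}0)v$, or $u(1\text{-}0)w(0\text{-}0)v$, or $u(0\text{-}0)w(1\text{-}0)v$. A vertex $u$ of $D$ is a weak king if every other vertex of $D$ is weakly reachable within two steps from $u$. *)

From mathcomp Require Import all_boot all_order all_algebra.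
Set Implicit Arguments. Unset Strict Implicit. Unset Printing Implicit Defensive.
Import GRing.Theory Num.Theory.

Definition oriented (T : finType) (a : rel T) : Prop :=
  (forall u, ~~ a u u) /\ (forall u v, a u v -> ~~ a v u).

Definition outdeg (T : finType) (a : rel T) (v : T) : nat := #|[set w | a v w]|.
Definition indeg (T : finType) (a : rel T) (v : T) : nat := #|[set w | a w v]|.

Definition score (T : finType) (a : rel T) (v : T) : int :=
  ((#|T| - 1)%:Z + (outdeg a v)%:Z - (indeg a v)%:Z)%R.

Definition arc10 (T : finType) (a : rel T) (u v : T) : bool := a u v.
Definition arc00 (T : finType) (a : rel T) (u v : T) : bool := ~~ a u v && ~~ a v u.

Definition weakly_reach2 (T : finType) (a : rel T) (u v : T) : Prop :=
  arc10 a u v \/ arc00 a u v \/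
  exists w : T, (arc10 a u w && arc10 a w v) \/ (arc10 a u w && arc00 a w v)
                \/ (arc00 a u w && arc10 a w v).

Definition weak_king (T : finType) (a : rel T) (u : T) : Prop :=
  forall v : T, v != u -> weakly_reach2 a u v.

(* If v does not weakly reach x within two steps, then x -> v, every
   out-neighbour of v is an out-neighbour of x and every in-neighbour of x is
   an in-neighbour of v: otherwise the offending neighbour w would give a path
   v (1-0) w (1-0) x, v (1-0) w (0-0) x or v (0-0) w (1-0) x.  Then x has
   strictly larger outdegree (it also beats v) and no larger indegree, so its
   score exceeds that of v. *)
From Stdlib Require Import Classical.
From mathcomp Require Import zify.
From mathcomp Require Import all_boot all_order all_algebra.
Import Order.TTheory GRing.Theory Num.Theory.

Set Implicit Arguments.
Unset Strict Implicit.
Unset Printing Implicit Defensive.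

Section Domination.

Variables (T : finType) (a : rel T).

Definition dominates (x u : T) : Prop :=
  [/\ a x u, forall w, a u w -> a x w & forall w, a w x -> a w u].

Lemma dominates_of_not_weakly_reach2 (u x : T) :
  ~ weakly_reach2 a u x -> dominates x u.
Proof.
move=> nreach; have nux : ~~ a u x by apply: contra_notN nreach; left.
have xu : a x u.
  by apply: contra_notT nreach => nxu; right; left; rewrite /arc00 nux.
split=> // w.
- move=> uw; apply: contra_notT nreach => nxw; right; right; exists w.
  have [wx | nwx] := boolP (a w x); first by left; rewrite /arc10 uw.
  by right; left; rewrite /arc10 /arc00 uw nwx nxw.
- move=> wx; apply: contra_notT nreach => nwu; right; right; exists w.
  have [uw | nuw] := boolP (a u w); first by left; rewrite /arc10 uw.
  by right; right; rewrite /arc10 /arc00 wx nuw nwu.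
Qed.

Lemma outdeg_lt_dominates (x u : T) :
  ~~ a u u -> dominates x u -> outdeg a u < outdeg a x.
Proof.
move=> nuu [xu out_sub _]; rewrite /outdeg.
have -> : #|[set w | a u w]|.+1 = #|u |: [set w | a u w]|.
  by rewrite cardsU1 inE (negbTE nuu).
apply: subset_leq_card; apply/subsetP => w; rewrite !inE.
by case/predU1P => [-> //|]; apply: out_sub.
Qed.

Lemma indeg_le_dominates (x u : T) :
  dominates x u -> indeg a x <= indeg a u.
Proof.
case=> _ _ in_sub; apply: subset_leq_card.
by apply/subsetP => w; rewrite !inE; apply: in_sub.
Qed.

Lemma score_lt_dominates (x u : T) :
  ~~ a u u -> dominates x u -> (score a u < score a x)%R.
Proof.
move=> nuu dom; rewrite /score.
have := outdeg_lt_dominates nuu dom; have := indeg_le_dominates dom.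
lia.
Qed.

End Domination.

Theorem theorem5 (T : finType) (a : rel T) (v : T) :
  oriented a ->
  (forall w : T, (score a w <= score a v)%R) ->
  weak_king a v.
Proof.
move=> [irr _] vmax x _; apply: NNPP => nreach.
have := vmax x; apply/negP; rewrite -ltNge.
exact: score_lt_dominates (irr v) (dominates_of_not_weakly_reach2 nreach).
Qed.
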